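(* (Fundamental Theorem of Calculus for piecewise continuous functions) For every $u\in\mathfrak{U}(\mathbb{R})$ and every $\gamma_n<\gamma_m$ in $\Gamma$, $$\int_{\gamma_n}^{\gamma_m}D_2u(x)\,dx=\sum_{i=n}^{m-1}\left[u^-(\gamma_{i+1})-u^+(\gamma_i)\right].$$
   Context: Framework (Λ-limits / nonstandard analysis): $\mathfrak{X}=\mathcal{P}_{fin}(\mathfrak{F}(\mathbb{R},\mathbb{R}))$ directed by inclusion; $\mathbb{R}^*\supset\mathbb{R}$ is a non-Archimedean ordered field of Λ-limits of nets $\mathfrak{X}\to\mathbb{R}$; internal sets/functions, natural extensions $E^*,f^*$, hyperfinite sums are defined via Λ-limits; for internal $u$, $\int_a^bu\,dx$ means $(\int_a^b)^*u\,dx$. For $\lambda\in\mathfrak{X}$, $V_\lambda$ is the span of $\lambda$; an internal $u=\lim_{\lambda\uparrow\Lambda}u_\lambda$ is an ultrafunction if $u_\lambda\in V_\lambda$ for all $\lambda$; for a vector space $W$ of real functions, $\widetilde{W}=W^*\cap\{\text{ultrafunctions}\}$. Grid: a positive infinite $\beta\in\mathbb{R}^*$, a hyperfinite $\Gamma=\{\gamma_0<\dots<\gamma_\ell\}\subset\mathbb{R}^*$ with $\gamma_0=-\beta$, $\gamma_\ell=\beta$, $0<\gamma_{j+1}-\gamma_j<\eta$ for a fixed infinitesimal $\eta$, and $\mathbb{R}\subseteq\Gamma$; $\mathbb{I}_j=(\gamma_j,\gamma_{j+1})_{\mathbb{R}^*}$ with characteristic function $\chi_j$. $\mathfrak{U}(\mathbb{R})$: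 functions $u:[-\beta,\beta]\to\mathbb{R}^*$ of the form $\sum_{j=0}^{\ell-1}v_j\chi_j$ with $v_j\in\widetilde{\mathcal{C}^1(\mathbb{R})}$, with the $L^2$ inner product $\int^*uv$; $u^\pm(\gamma_j)$ are the internal one-sided limits of $u$ at grid points. For $u=\sum_jv_j\chi_j\in\mathfrak{U}(\mathbb{R})$, $u'=\sum_jv_j'\chi_j$ (piecewise derivative) and $D_2u=P_{\mathfrak{U}}(u')$, where $P_{\mathfrak{U}}$ is the orthogonal projection onto $\mathfrak{U}(\mathbb{R})$ in $[L^2(\mathbb{R})]^*$. *)

(* Λ-limits are modelled as the ultrapower of nets
   indexed by finite subsets λ of F(R,R) modulo a fine ultrafilter U. *)
From HB Require Import structures.
From mathcomp Require Import all_boot all_order all_algebra.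
From mathcomp Require Import all_classical all_reals all_analysis.
From Stdlib Require Import ClassicalEpsilon.
Set Implicit Arguments. Unset Strict Implicit. Unset Printing Implicit Defensive.
Import Order.TTheory GRing.Theory Num.Theory.
Import numFieldNormedType.Exports.
Local Open Scope classical_set_scope.
Local Open Scope ring_scope.

Section LambdaDefs.
Variable R : realType.

Definition Xi := set (R -> R).

Definition fine_ultrafilter (U : set (set Xi)) : Prop :=
  U setT /\ ~ U set0 /\
  (forall A B, U A -> U B -> U (A `&` B)) /\
  (forall A B, A `<=` B -> U A -> U B) /\
  (forall A, U A \/ U (~` A)) /\
  U [set l | finite_set l] /\
  (forall l0 : Xi, finite_set l0 -> U [set l | l0 `<=` l]).

Definition in_span (l : Xi) (f : R -> R) : Prop :=
  exists (n : nat) (g : nat -> R -> R) (c : nat -> R),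
    (forall i, (i < n)%N -> l (g i)) /\ f = (fun x => \sum_(i < n) c i * g i x).

Definition C1 (f : R -> R) : Prop :=
  (forall x : R, derivable f x 1) /\ continuous (derive1 f).

Definition chi (a b : R) (x : R) : R := if (a < x) && (x < b) then 1 else 0.

Definition pw (ell : nat) (gam : nat -> R) (w : nat -> R -> R) : R -> R :=
  fun x => \sum_(j < ell) w j x * chi (gam j) (gam j.+1) x.

(* level-λ version of 𝔘(R) *)
Definition Ulev (l : Xi) (ell : nat) (gam : nat -> R) (f : R -> R) : Prop :=
  exists w : nat -> R -> R,
    (forall j, (j < ell)%N -> in_span l (w j) /\ C1 (w j)) /\ f = pw ell gam w.

Definition L2ip (f g : R -> R) : R :=
  Rintegral lebesgue_measure setT (fun x => f x * g x).

Definition is_proj (l : Xi) (ell : nat) (gam : nat -> R) (f p : R -> R) : Prop :=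
  Ulev l ell gam p /\ (forall z, Ulev l ell gam z -> L2ip (f \- p) z = 0).

Definition projU (l : Xi) (ell : nat) (gam : nat -> R) (f : R -> R) : R -> R :=
  epsilon (inhabits (fun _ : R => 0)) (is_proj l ell gam f).

Definition pw_deriv (ell : nat) (gam : nat -> R) (v : nat -> R -> R) : R -> R :=
  pw ell gam (fun j => derive1 (v j)).

(* level-λ value of D_2 u = P_𝔘(u') *)
Definition D2 (l : Xi) (ell : nat) (gam : nat -> R) (v : nat -> R -> R) : R -> R :=
  projU l ell gam (pw_deriv ell gam v).

Definition lim_right (f : R -> R) (a : R) : R := lim (f @ at_right a).
Definition lim_left (f : R -> R) (a : R) : R := lim (f @ at_left a).

End LambdaDefs.

From HB Require Import structures.
From mathcomp Require Import all_boot all_order all_algebra.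
From mathcomp Require Import all_classical all_reals all_analysis.
From mathcomp Require Import ring.
From Stdlib Require Import ClassicalEpsilon.
Import Order.TTheory GRing.Theory Num.Theory.
Import numFieldNormedType.Exports.
Local Open Scope classical_set_scope.
Local Open Scope ring_scope.
Set Implicit Arguments. Unset Strict Implicit.

(* At each level, D2 u is the L^2-orthogonal projection of the piecewise
   derivative u' = sum_j v_j' chi_j onto the level space, so u' - D2 u is
   orthogonal to every element of that space.  Fineness puts the constant 1 in
   the level index, so the indicator of ]gam_n, gam_m[ assembled from the grid
   cells is such an element; testing against it gives
   int_{gam_n}^{gam_m} D2 u = int_{gam_n}^{gam_m} u'
                            = sum_i (v_i(gam_(i+1)) - v_i(gam_i))
   by the fundamental theorem of calculus on each cell, and these endpoint
   values are the one-sided limits of u at the grid points.  The projection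
   exists because the level space is spanned by the finitely many products
   h chi_j (h in the level index) and the L^2 product is a semi-inner product
   on piecewise continuous functions.  All of this holds on a set of levels in
   the ultrafilter. *)

Section FiniteSpan.
Variables (K : fieldType) (V : lmodType K) (I : Type) (G : I -> V).

Definition lin_closed (W : V -> Prop) :=
  W 0 /\ forall a x y, W x -> W y -> W (a *: x + y).

Lemma lin_closedD W x y : lin_closed W -> W x -> W y -> W (x + y).
Proof. by move=> [_ WC] Wx Wy; have := WC 1 x y Wx Wy; rewrite scale1r. Qed.

Lemma lin_closedZ W a x : lin_closed W -> W x -> W (a *: x).
Proof. by move=> [W0 WC] Wx; have := WC a x 0 Wx W0; rewrite addr0. Qed.

Lemma lin_closedB W x y : lin_closed W -> W x -> W y -> W (x - y).
Proof.
by move=> [_ WC] Wx Wy; have := WC (-1) y x Wy Wx; rewrite scaleN1r addrC.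
Qed.

Lemma lin_closedI W W' : lin_closed W -> lin_closed W' ->
  lin_closed (fun x => W x /\ W' x).
Proof.
move=> [W0 WC] [W'0 W'C]; split=> // a x y [Wx W'x] [Wy W'y].
by split; [exact: WC | exact: W'C].
Qed.

Definition span_seq (s : seq I) x :=
  exists c : I -> K, x = \sum_(i <- s) c i *: G i.

Lemma span_seq_lin_closed s : lin_closed (span_seq s).
Proof.
split; first by exists (fun=> 0); rewrite big1 // => i _; rewrite scale0r.
move=> a x y [c ->] [d ->]; exists (fun i => a * c i + d i).
rewrite scaler_sumr -big_split /=; apply: eq_bigr => i _.
by rewrite scalerDl scalerA.
Qed.

Lemma span_seq_cons_exchange i s w z :
  span_seq (i :: s) w -> ~ span_seq s w -> span_seq (i :: s) z ->
  exists t, span_seq s (z - t *: w).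
Proof.
move=> [c ew] nsw [d ez]; rewrite big_cons in ew; rewrite big_cons in ez.
have ci0 : c i != 0.
  apply/negP => /eqP ci0; apply: nsw; exists c.
  by rewrite ew ci0 scale0r add0r.
exists (d i / c i), (fun j => d j - d i / c i * c j).
rewrite ez ew scalerDr scaler_sumr scalerA divfK //.
rewrite opprD addrACA subrr add0r -sumrN -big_split /=.
by apply: eq_bigr => j _; rewrite scalerBl scalerA.
Qed.

End FiniteSpan.

Section OrthogonalProjection.
Variables (R : realFieldType) (V : lmodType R).
(* [B] need only be a semi-inner product on the linearly closed predicate [A]:
   the Lebesgue L^2 product is junk on non-integrable functions. *)
Variables (A : V -> Prop) (B : V -> V -> R).
Hypothesis A_lin_closed : lin_closed A.
Hypothesis B_linl : forall a x y z, A x -> A y -> A z ->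
  B (a *: x + y) z = a * B x z + B y z.
Hypothesis B_sym : forall x y, A x -> A y -> B x y = B y x.
Hypothesis B_ge0 : forall x, A x -> 0 <= B x x.

Definition orth_proj (W : V -> Prop) f p :=
  W p /\ forall z, W z -> B (f - p) z = 0.

Let AD x y : A x -> A y -> A (x + y). Proof. exact: lin_closedD. Qed.
Let AZ a x : A x -> A (a *: x). Proof. exact: lin_closedZ. Qed.
Let AB x y : A x -> A y -> A (x - y). Proof. exact: lin_closedB. Qed.

Let B0l z : A z -> B 0 z = 0.
Proof.
move=> Az; have A0 := A_lin_closed.1.
have := B_linl 1 A0 A0 Az; rewrite scaler0 addr0 mul1r.
by move=> /(congr1 (fun t => t - B 0 z)); rewrite subrr addrK => <-.
Qed.

Let BDl x y z : A x -> A y -> A z -> B (x + y) z = B x z + B y z.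
Proof. by move=> Ax Ay Az; have := B_linl 1 Ax Ay Az; rewrite scale1r mul1r. Qed.

Let BZl a x z : A x -> A z -> B (a *: x) z = a * B x z.
Proof.
move=> Ax Az; have := B_linl a Ax A_lin_closed.1 Az; rewrite addr0 => ->.
by rewrite B0l // addr0.
Qed.

Let BBl x y z : A x -> A y -> A z -> B (x - y) z = B x z - B y z.
Proof.
move=> Ax Ay Az; have := B_linl (-1) Ay Ax Az; rewrite scaleN1r addrC => ->.
by rewrite mulN1r addrC.
Qed.

Let BDr x y z : A x -> A y -> A z -> B z (x + y) = B z x + B z y.
Proof.
move=> Ax Ay Az.
by rewrite (B_sym Az (AD Ax Ay)) BDl // (B_sym Ax Az) (B_sym Ay Az).
Qed.

Let BZr a x z : A x -> A z -> B z (a *: x) = a * B z x.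
Proof. by move=> Ax Az; rewrite (B_sym Az (AZ a Ax)) BZl // (B_sym Ax Az). Qed.

(* If [B r h != 0], then [t |-> B (r + t h) (r + t h)] is affine with nonzero
   slope, so it takes negative values. *)
Lemma isotropic_orth r h : A r -> A h -> B h h = 0 -> B r h = 0.
Proof.
move=> Ar Ah hh0; apply/eqP/negP => /negP rh0.
pose t := - (B r r + 1) / (2 * B r h).
have Ath := AZ t Ah; have Arth := AD Ar Ath.
have := B_ge0 Arth.
rewrite (BDl Ar Ath Arth) (BDr Ar Ath Ar) (BZl t Ah Arth) (BDr Ar Ath Ah).
rewrite (BZr t Ah Ar) (BZr t Ah Ah) (B_sym Ah Ar) hh0.
have -> : B r r + t * B r h + t * (B r h + t * 0) = -1 by rewrite /t; field.
by rewrite ler0N1.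
Qed.

(* The projection onto [W] is [p' + (B (f - p') h / B h h) *: h], or [p'] when
   [h] is isotropic. *)
Lemma orth_proj_extend (W W' : V -> Prop) h f p' :
  lin_closed W -> W `<=` A -> W' `<=` W -> W h ->
  (forall y, W' y -> B h y = 0) ->
  (forall z, W z -> exists t y, W' y /\ z = y + t *: h) ->
  A f -> orth_proj W' f p' -> exists p, orth_proj W f p.
Proof.
move=> WC WA W'W Wh hW' Wdec Af [W'p' p'W'].
have Ah := WA _ Wh; have Ap' := WA _ (W'W _ W'p').
pose r := f - p'; have Ar : A r by exact: AB.
have [hh0|hh0] := eqVneq (B h h) 0.
  exists p'; split => [|z /Wdec[t [y [W'y ->]]]]; first exact: W'W.
  have Ay := WA _ (W'W _ W'y).
  rewrite -/r (BDr Ay (AZ t Ah) Ar) (BZr t Ah Ar) (isotropic_orth Ar Ah hh0).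
  by rewrite p'W' // mulr0 addr0.
pose al := B r h / B h h.
exists (p' + al *: h); split.
  by apply: lin_closedD => //; [exact: W'W | exact: lin_closedZ].
move=> z /Wdec[t [y [W'y ->]]]; have Ay := WA _ (W'W _ W'y).
have -> : f - (p' + al *: h) = r - al *: h by rewrite /r opprD addrA.
have Ath := AZ t Ah; have Aah := AZ al Ah; have Ayth := AD Ay Ath.
rewrite (BBl Ar Aah Ayth) (BZl al Ah Ayth) (BDr Ay Ath Ar) (BDr Ay Ath Ah).
by rewrite (BZr t Ah Ar) (BZr t Ah Ah) p'W' // hW' // /al; field.
Qed.

Lemma orth_proj_exists I (G : I -> V) (s : seq I) (W : V -> Prop) :
  lin_closed W -> W `<=` A -> W `<=` span_seq G s ->
  forall f, A f -> exists p, orth_proj W f p.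
Proof.
elim: s W => [|i s IH] W WC WA Wsp f Af.
  exists 0; split => [|z /Wsp[c ->]]; first exact: WC.1.
  by rewrite big_nil subr0 B_sym ?B0l //; exact: A_lin_closed.1.
have [Wsps|] := boolp.pselect (W `<=` span_seq G s); first exact: IH.
move=> /boolp.existsNP[w0 /boolp.not_implyP[Ww0 nsp]].
pose W' x := W x /\ span_seq G s x.
have W'C : lin_closed W' := lin_closedI WC (span_seq_lin_closed G s).
have W'A : W' `<=` A by move=> x [/WA].
have IH' := IH W' W'C W'A (fun x Wx => Wx.2).
have [q [W'q qW']] := IH' w0 (WA _ Ww0).
have [p' p'W'] := IH' f Af.
apply: (orth_proj_extend (W' := W') (h := w0 - q) WC WA _ _ _ _ Af p'W').
- by move=> x [].
- by apply: lin_closedB W'q.1.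
- by move=> y /qW'.
move=> z Wz; have [t W'zt] := span_seq_cons_exchange (Wsp _ Ww0) nsp (Wsp _ Wz).
exists t, (t *: q + (z - t *: w0)); split.
  apply: W'C.2 => //; split; last exact: W'zt.
  by apply: lin_closedB => //; exact: lin_closedZ.
by rewrite scalerBr [RHS]addrC addrA subrK addrC subrK.
Qed.

End OrthogonalProjection.

Section C1Span.
Variable R : realType.

Lemma C1_continuous (f : R -> R) : C1 f -> continuous f.
Proof.
move=> [df _] x; apply: differentiable_continuous.
by rewrite -derivable1_diffP; exact: df.
Qed.

Lemma C1_cst (c : R) : C1 (fun=> c).
Proof.
split; first by move=> x; exact: derivable_cst.
have -> : derive1 (fun=> c) = (fun=> 0 : R).
  by apply/funext => x; exact: derive1_cst.
exact: cst_continuous.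
Qed.

Lemma C1_lin_closed : lin_closed (@C1 R).
Proof.
split; first exact: C1_cst.
move=> a f g [df cf] [dg cg]; split.
  by move=> x; apply: derivableD => //; apply: derivableZ.
have -> : derive1 (a *: f + g) = a *: derive1 f + derive1 g.
  apply/funext => x; rewrite !fctE !derive1E deriveD //; last exact: derivableZ.
  by rewrite deriveZ.
move=> x; apply: continuousD; last exact: cg.
by apply: (@continuousZ _ _ _ (cst a)); [exact: cst_continuous | exact: cf].
Qed.

Lemma in_span_seqE (l : set (R -> R)) (s : seq (R -> R)) :
  l = [set` s] -> uniq s -> in_span l = span_seq id s.
Proof.
move=> ls us; apply/funext => f; apply/propext; split.
  move=> [n [g [c [gl ->]]]]; elim: n => [|n IH] in gl *.
    exists (fun=> 0); rewrite big1 => [|h _]; last by rewrite scale0r.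
    by apply/funext => x; rewrite big_ord0.
  have [a ea] := IH (fun i il => gl i (ltnW il)).
  have gn : g n \in s by have := gl n (ltnSn n); rewrite ls.
  exists (fun h => a h + (if h == g n then c n else 0)).
  under eq_bigr do rewrite scalerDl.
  rewrite big_split /= -ea (bigD1_seq (g n)) //= eqxx big1 ?addr0; last first.
    by move=> h hne; rewrite (negbTE hne) scale0r.
  by apply/funext => x; rewrite big_ord_recr.
move=> [a ->]; exists (size s), (nth 0 s), (fun i => a (nth 0 s i)); split.
  by move=> i il; rewrite ls /=; exact: mem_nth.
apply/funext => x; rewrite fct_sumE (big_nth 0) big_mkord.
by apply: eq_bigr.
Qed.

End C1Span.

Lemma Rintegral_sum d (T : measurableType d) (R : realType)
    (mu : {measure set T -> \bar R}) (D : set T) I (s : seq I) (F : I -> T -> R) :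
  measurable D -> (forall i, mu.-integrable D (EFin \o F i)) ->
  Rintegral mu D (fun x => \sum_(i <- s) F i x) =
  \sum_(i <- s) Rintegral mu D (F i).
Proof.
move=> mD iF; elim: s => [|i s IH].
  by under eq_Rintegral do rewrite big_nil; rewrite big_nil Rintegral_cst // mul0r.
under eq_Rintegral do rewrite big_cons; rewrite big_cons -IH RintegralD //.
have -> : EFin \o (fun x => \sum_(j <- s) F j x) =
    fun x => \sum_(j <- s) (F j x)%:E.
  by apply/funext => x /=; rewrite sumEFin.
by apply: (integrable_sum mD) => j _; exact: iF.
Qed.

Lemma integrable_continuous_itv (R : realType) (w : R -> R) (a b : R)
    (D : set R) :
  measurable D -> D `<=` `[a, b] -> continuous w ->
  (@lebesgue_measure R).-integrable D (EFin \o w).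
Proof.
move=> mD Dab cw; have iab : (@lebesgue_measure R).-integrable `[a, b] (EFin \o w).
  apply: continuous_compact_integrable; first exact: segment_compact.
  exact: continuous_subspaceT.
exact: integrableS iab.
Qed.

Lemma Rintegral_derive1_C1 (R : realType) (f : R -> R) (a b : R) :
  a < b -> C1 f ->
  Rintegral (@lebesgue_measure R) `]a, b[ (derive1 f) = f b - f a.
Proof.
move=> ab C1f; have cf := C1_continuous C1f; case: C1f => df cdf.
have itv_int (D : set R) : measurable D -> D `<=` `[a, b] ->
    (@lebesgue_measure R).-integrable D (EFin \o derive1 f).
  by move=> mD Dab; exact: (integrable_continuous_itv mD Dab cdf).
rewrite (Rintegral_itv_obnd_cbnd (itv_int _ _ _)) //; last first.
  by move=> x /=; rewrite !in_itv /= => /andP[/ltW -> /ltW ->].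
rewrite (Rintegral_itv_bndo_bndc (itv_int _ _ _)) //; last first.
  by move=> x /=; rewrite !in_itv /= => /andP[-> /ltW ->].
rewrite /Rintegral (@continuous_FTC2 _ _ f _ _ ab) //=.
- exact: continuous_subspaceT.
- split; first by move=> x _; exact: df.
  + exact: cvg_at_right_filter (cf a).
  + exact: cvg_at_left_filter (cf b).
Qed.

Section Grid.
Variable R : realType.
Notation mu := (@lebesgue_measure R).
Variables (ell : nat) (gam : nat -> R).
Hypothesis gam_incr : forall j, (j < ell)%N -> gam j < gam j.+1.

Lemma gam_le i j : (i <= j)%N -> (j <= ell)%N -> gam i <= gam j.
Proof.
elim: j => [|j IH] ij jl; first by move: ij; rewrite leqn0 => /eqP ->.
move: ij; rewrite leq_eqVlt => /orP[/eqP -> //|]; rewrite ltnS => ij.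
exact/(le_trans (IH ij (ltnW jl)))/ltW/gam_incr.
Qed.

Lemma grid_cell_eq i j x : (i < ell)%N -> (j < ell)%N ->
  gam i < x < gam i.+1 -> gam j < x < gam j.+1 -> i = j.
Proof.
have cellP i' j' : (i' < j')%N -> (j' < ell)%N ->
    gam i' < x < gam i'.+1 -> gam j' < x < gam j'.+1 -> False.
  move=> ij jl /andP[_ xi] /andP[jx _].
  by have := lt_le_trans (lt_trans jx xi) (gam_le ij (ltnW jl)); rewrite ltxx.
move=> il jl hi hj; case: (ltngtP i j) => // [ij|ji].
- by case: (cellP _ _ ij jl hi hj).
- by case: (cellP _ _ ji il hj hi).
Qed.

Lemma pw_cell w i x : (i < ell)%N -> gam i < x < gam i.+1 ->
  pw ell gam w x = w i x.
Proof.
move=> il hx; rewrite /pw (bigD1 (Ordinal il)) //= /chi hx mulr1 big1 ?addr0 //.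
move=> j /eqP ji; case: ifP => [hj|_]; last by rewrite mulr0.
by case: ji; apply: val_inj; exact: grid_cell_eq (ltn_ord j) il hj hx.
Qed.

Lemma pw_off w x : (forall i, (i < ell)%N -> ~~ (gam i < x < gam i.+1)) ->
  pw ell gam w x = 0.
Proof. by move=> h; rewrite /pw big1 // => j _; rewrite /chi ifN ?mulr0 ?h. Qed.

Lemma pwM w1 w2 :
  pw ell gam w1 \* pw ell gam w2 = pw ell gam (fun j => w1 j \* w2 j).
Proof.
apply/funext => x /=.
have [[i il hx]|] :=
  boolp.pselect (exists2 i, (i < ell)%N & gam i < x < gam i.+1).
  by rewrite !(pw_cell _ il hx).
move=> hx; have off i : (i < ell)%N -> ~~ (gam i < x < gam i.+1).
  by move=> il; apply/negP => hi; apply: hx; exists i.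
by rewrite !pw_off ?mulr0.
Qed.

Lemma pw_lin a w1 w2 :
  a *: pw ell gam w1 + pw ell gam w2 = pw ell gam (fun j => a *: w1 j + w2 j).
Proof.
apply/funext => x.
have -> : (a *: pw ell gam w1 + pw ell gam w2) x =
    a * pw ell gam w1 x + pw ell gam w2 x by [].
rewrite /pw mulr_sumr -big_split /=.
by apply: eq_bigr => j _; rewrite mulrA -mulrDl.
Qed.

Lemma pwB w1 w2 :
  pw ell gam w1 \- pw ell gam w2 = pw ell gam (fun j => w1 j \- w2 j).
Proof.
by apply/funext => x /=; rewrite /pw -sumrB; apply: eq_bigr => j _; rewrite mulrBl.
Qed.

Definition pw_continuous (f : R -> R) := exists w,
  (forall j, (j < ell)%N -> continuous (w j)) /\ f = pw ell gam w.

Lemma mul_chi_patch (w : R -> R) a b :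
  (fun x => w x * chi a b x) = w \_ `]a, b[.
Proof.
apply/funext => x; rewrite patchE /chi; case: ifP => /= h.
  by rewrite mulr1 mem_set //= in_itv /= h.
by rewrite mulr0 ifF //; apply/negbTE; rewrite notin_setE /= in_itv /= h.
Qed.

Lemma integrable_cell D (w : R -> R) a b : measurable D -> continuous w ->
  mu.-integrable D (EFin \o (fun x => w x * chi a b x)).
Proof.
move=> mD cw; rewrite mul_chi_patch -restrict_EFin.
apply/integrable_restrict => //.
apply: (integrable_continuous_itv (a := a) (b := b)) cw; first exact: measurableI.
by move=> x [_] /=; rewrite !in_itv /= => /andP[/ltW -> /ltW ->].
Qed.

Lemma integrable_pw D w : measurable D ->
  (forall j, (j < ell)%N -> continuous (w j)) ->
  mu.-integrable D (EFin \o pw ell gam w).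
Proof.
move=> mD cw; have -> : EFin \o pw ell gam w =
    fun x => \sum_(j < ell) (w j x * chi (gam j) (gam j.+1) x)%:E.
  by apply/funext => x /=; rewrite sumEFin.
by apply: (integrable_sum mD) => j _; exact: integrable_cell (cw _ (ltn_ord j)).
Qed.

Lemma Rintegral_pw D w : measurable D ->
  (forall j, (j < ell)%N -> continuous (w j)) ->
  Rintegral mu D (pw ell gam w) =
  \sum_(j < ell) Rintegral mu (D `&` `]gam j, gam j.+1[) (w j).
Proof.
move=> mD cw; rewrite /pw Rintegral_sum //; last first.
  by move=> j; exact: integrable_cell (cw _ (ltn_ord j)).
apply: eq_bigr => j _; rewrite Rintegral_mkcondr; apply: eq_Rintegral => x _.
by rewrite -mul_chi_patch.
Qed.

Lemma lim_left_pw w i : (i < ell)%N -> continuous (w i) ->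
  lim_left (pw ell gam w) (gam i.+1) = w i (gam i.+1).
Proof.
move=> il cw; apply: cvg_lim => //.
apply: cvg_trans (cvg_at_left_filter (cw (gam i.+1))).
apply: near_eq_cvg; near=> x; rewrite (pw_cell w il) //; apply/andP; split.
- near: x; exact: nbhs_left_gt (gam_incr il).
- near: x; exact: nbhs_left_lt.
Unshelve. all: by end_near.
Qed.

Lemma lim_right_pw w i : (i < ell)%N -> continuous (w i) ->
  lim_right (pw ell gam w) (gam i) = w i (gam i).
Proof.
move=> il cw; apply: cvg_lim => //.
apply: cvg_trans (cvg_at_right_filter (cw (gam i))).
apply: near_eq_cvg; near=> x; rewrite (pw_cell w il) //; apply/andP; split.
- near: x; exact: nbhs_right_gt.
- near: x; exact: nbhs_right_lt (gam_incr il).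
Unshelve. all: by end_near.
Qed.

Definition window n m : R -> R :=
  pw ell gam (fun j _ => if (n <= j < m)%N then 1 else 0).

Lemma sum_window (F : nat -> R) n m : (m <= ell)%N ->
  \sum_(j < ell) (if (n <= j < m)%N then F j else 0) = \sum_(n <= j < m) F j.
Proof.
move=> ml; rewrite -big_mkcond -(big_mkord (fun j => n <= j < m)%N).
rewrite (big_nat_widen n m ell xpredT F ml) (big_nat_widenl n 0 ell _ F (leq0n n)).
by apply: eq_bigl => j; rewrite andbC.
Qed.

Lemma segment_cell n m j : (n <= m)%N -> (m <= ell)%N -> (j < ell)%N ->
  `[gam n, gam m] `&` `]gam j, gam j.+1[ =
  if (n <= j < m)%N then `]gam j, gam j.+1[%classic else set0.
Proof.
move=> nm ml jl; case: ifPn => [/andP[nj jm]|].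
  apply/setIidr => x /=; rewrite !in_itv /= => /andP[/ltW jx /ltW xj].
  by rewrite (le_trans (gam_le nj (ltnW jl)) jx) (le_trans xj (gam_le jm ml)).
rewrite negb_and -!ltnNge => njm; apply/seteqP; split => x //=.
rewrite !in_itv /= => -[/andP[nx xm] /andP[jx xj]].
case/orP: njm => [jn|mj].
- have := gam_le jn (leq_trans nm ml).
  by move=> h; have := lt_le_trans xj (le_trans h nx); rewrite ltxx.
- rewrite ltnS in mj; have := gam_le mj (ltnW jl).
  by move=> h; have := le_lt_trans xm (le_lt_trans h jx); rewrite ltxx.
Qed.

Lemma Rintegral_pw_segment w n m : (n <= m)%N -> (m <= ell)%N ->
  (forall j, (j < ell)%N -> continuous (w j)) ->
  Rintegral mu `[gam n, gam m] (pw ell gam w) =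
  \sum_(n <= j < m) Rintegral mu `]gam j, gam j.+1[ (w j).
Proof.
move=> nm ml cw; rewrite Rintegral_pw // -sum_window //; apply: eq_bigr => j _.
by rewrite segment_cell //; case: ifP; rewrite ?Rintegral_set0.
Qed.

Lemma Rintegral_pw_window w n m : (m <= ell)%N ->
  (forall j, (j < ell)%N -> continuous (w j)) ->
  Rintegral mu setT (pw ell gam w \* window n m) =
  \sum_(n <= j < m) Rintegral mu `]gam j, gam j.+1[ (w j).
Proof.
move=> ml cw; rewrite pwM Rintegral_pw //; last first.
  by move=> j jl x; apply: continuousM; [exact: cw | exact: cst_continuous].
rewrite -sum_window //; apply: eq_bigr => j _; rewrite setTI.
case: ifP => _; first by apply: eq_Rintegral => x _; rewrite mulr1.
by under eq_Rintegral do rewrite mulr0; rewrite Rintegral_cst // mul0r.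
Qed.

Lemma pw_continuous_lin_closed : lin_closed pw_continuous.
Proof.
split.
  exists (fun _ _ => 0); split; first by move=> j _; exact: cst_continuous.
  by apply/funext => x; rewrite /pw big1 // => j _; rewrite mul0r.
move=> a x y [w1 [c1 ->]] [w2 [c2 ->]]; exists (fun j => a *: w1 j + w2 j).
split; last by rewrite pw_lin.
move=> j jl z; apply: continuousD; last exact: c2.
by apply: (@continuousZ _ _ _ (cst a)); [exact: cst_continuous | exact: c1].
Qed.

Lemma integrable_pw_continuousM f g : pw_continuous f -> pw_continuous g ->
  mu.-integrable setT (EFin \o (f \* g)).
Proof.
move=> [w1 [c1 ->]] [w2 [c2 ->]]; rewrite pwM; apply: integrable_pw => // j jl x.
by apply: continuousM; [exact: c1 | exact: c2].
Qed.

End Grid.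

Section L2Grid.
Variable R : realType.
Variables (ell : nat) (gam : nat -> R).
Hypothesis gam_incr : forall j, (j < ell)%N -> gam j < gam j.+1.
Local Notation pwc := (pw_continuous ell gam).
Local Notation mu := (@lebesgue_measure R).

Lemma L2ip_linl a x y z : pwc x -> pwc y -> pwc z ->
  L2ip (a *: x + y) z = a * L2ip x z + L2ip y z.
Proof.
move=> cx cy cz; have cax := lin_closedZ a (pw_continuous_lin_closed ell gam) cx.
rewrite /L2ip; under eq_Rintegral do rewrite mulrDl.
have int_z f : pwc f -> mu.-integrable setT (EFin \o (f \* z)).
  by move=> cf; exact (integrable_pw_continuousM gam_incr cf cz).
rewrite RintegralD ?int_z //.
have -> : (fun t => (a *: x) t * z t) = (fun t => a * (x t * z t)).
  by apply/funext => t; rewrite mulrA.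
by rewrite RintegralZl ?int_z.
Qed.

Lemma L2ip_sym (x y : R -> R) : L2ip x y = L2ip y x.
Proof. by rewrite /L2ip; under eq_Rintegral do rewrite mulrC. Qed.

Lemma L2ip_ge0 (x : R -> R) : 0 <= L2ip x x.
Proof. by apply: Rintegral_ge0 => t _; rewrite -expr2 sqr_ge0. Qed.

End L2Grid.

Section LevelSpace.
Variable R : realType.
Notation mu := (@lebesgue_measure R).
Variables (l : set (R -> R)) (s : seq (R -> R)).
Hypothesis ls : l = [set` s].
Hypothesis s_uniq : uniq s.
Variables (ell : nat) (gam : nat -> R).
Hypothesis gam_incr : forall j, (j < ell)%N -> gam j < gam j.+1.

Lemma Ulev_lin_closed : lin_closed (Ulev l ell gam).
Proof.
have spanC : lin_closed (in_span l).
  by rewrite (in_span_seqE ls s_uniq); exact: span_seq_lin_closed.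
split.
  exists (fun _ _ => 0); split.
    by move=> j _; split; [exact: spanC.1 | exact: C1_cst].
  by apply/funext => x; rewrite /pw big1 // => j _; rewrite mul0r.
move=> a x y [w1 [h1 ->]] [w2 [h2 ->]]; exists (fun j => a *: w1 j + w2 j).
split; last by rewrite pw_lin.
move=> j jl; have [s1 c1] := h1 j jl; have [s2 c2] := h2 j jl.
by split; [exact: spanC.2 | exact: (C1_lin_closed _).2].
Qed.

Lemma Ulev_pw_continuous : Ulev l ell gam `<=` pw_continuous ell gam.
Proof.
move=> _ [w [hw ->]]; exists w; split => // j jl.
exact: C1_continuous (hw j jl).2.
Qed.

Lemma Ulev_span : Ulev l ell gam `<=`
  span_seq (fun q : nat * (R -> R) => q.2 \* chi (gam q.1) (gam q.1.+1))
           [seq (j, h) | j <- iota 0 ell, h <- s].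
Proof.
move=> _ [w [hw ->]].
have /boolp.choice[c hc] : forall j, exists c : (R -> R) -> R,
    (j < ell)%N -> w j = \sum_(h <- s) c h *: h.
  move=> j; have [jl|] := boolp.pselect (j < ell)%N; last by exists (fun=> 0).
  by have := (hw j jl).1; rewrite (in_span_seqE ls s_uniq) => -[c ->]; exists c.
exists (fun q => c q.1 q.2); apply/funext => t.
rewrite fct_sumE big_allpairs_dep /pw /=.
rewrite -(big_mkord xpredT (fun j => w j t * chi (gam j) (gam j.+1) t)).
rewrite /index_iota subn0.
apply: eq_big_seq => j; rewrite mem_iota add0n => /andP[_ jl].
rewrite (hc j jl) fct_sumE mulr_suml; apply: eq_bigr => h _; exact/esym/mulrA.
Qed.

Lemma projU_is_proj f : pw_continuous ell gam f ->
  is_proj l ell gam f (projU l ell gam f).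
Proof.
move=> cf; apply: epsilon_spec.
have [p [Wp hp]] := orth_proj_exists (pw_continuous_lin_closed ell gam)
  (L2ip_linl gam_incr) (fun x y _ _ => L2ip_sym x y) (fun x _ => L2ip_ge0 x)
  Ulev_lin_closed Ulev_pw_continuous Ulev_span cf.
by exists p.
Qed.

Lemma window_Ulev n m : l (fun=> 1) -> Ulev l ell gam (window ell gam n m).
Proof.
move=> l1; exists (fun j _ => if (n <= j < m)%N then 1 else 0); split => // j jl.
case: (n <= j < m)%N; split; try exact: C1_cst.
- exists 1%N, (fun _ _ => 1), (fun _ => 1); split => //.
  by apply/funext => x; rewrite big_ord1 mulr1.
- by rewrite (in_span_seqE ls s_uniq); exact: (span_seq_lin_closed _ _).1.
Qed.

Lemma Rintegral_D2 v n m : (forall j, (j < ell)%N -> C1 (v j)) ->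
  (n <= m)%N -> (m <= ell)%N -> l (fun=> 1) ->
  Rintegral mu `[gam n, gam m] (D2 l ell gam v) =
  \sum_(n <= i < m) (lim_left (pw ell gam v) (gam i.+1)
                    - lim_right (pw ell gam v) (gam i)).
Proof.
move=> hv nm ml l1.
have cv j : (j < ell)%N -> continuous (v j) by move/hv/C1_continuous.
have cdv j : (j < ell)%N -> continuous (derive1 (v j)) by move/hv => [].
have [[wp [hwp eD2]] orth] := @projU_is_proj (pw_deriv ell gam v)
  (ex_intro _ _ (conj cdv erefl)).
have cwp j : (j < ell)%N -> continuous (wp j) by move/hwp => [_ /C1_continuous].
have int_cell w j :
    continuous w -> mu.-integrable `]gam j, gam j.+1[ (EFin \o w).
  apply: (integrable_continuous_itv (a := gam j) (b := gam j.+1)) => // x /=.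
  by rewrite !in_itv /= => /andP[/ltW -> /ltW ->].
have o : Rintegral mu setT (pw ell gam (fun j => derive1 (v j) \- wp j)
                            \* window ell gam n m) = 0.
  by rewrite -pwB -eD2; exact: orth _ (window_Ulev n m l1).
rewrite Rintegral_pw_window // in o; last first.
  by move=> j jl x; apply: cvgB; [exact: cdv | exact: cwp].
have {}o : \sum_(n <= j < m) (Rintegral mu `]gam j, gam j.+1[ (derive1 (v j))
    - Rintegral mu `]gam j, gam j.+1[ (wp j)) = 0.
  rewrite -[RHS]o; apply: eq_big_nat => j /andP[_ jm]; have jl := leq_trans jm ml.
  rewrite RintegralB //; first exact (int_cell _ _ (cdv _ jl)).
  exact (int_cell _ _ (cwp _ jl)).
move/eqP: o; rewrite sumrB subr_eq0 => /eqP o.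
rewrite /D2 eD2 Rintegral_pw_segment // -o.
apply: eq_big_nat => j /andP[_ jm]; have jl := leq_trans jm ml.
rewrite (lim_left_pw gam_incr jl (cv j jl)) (lim_right_pw gam_incr jl (cv j jl)).
exact: Rintegral_derive1_C1 (gam_incr jl) (hv j jl).
Qed.

End LevelSpace.

Unset Implicit Arguments.

Theorem mainTheorem14 (R : realType) (U : set (set (set (R -> R))))
  (hU : fine_ultrafilter U)
  (beta eta : set (R -> R) -> R) (ell : set (R -> R) -> nat)
  (gam : set (R -> R) -> nat -> R)
  (hbeta : forall r : R, U [set l | r < beta l])
  (heta : forall r : R, 0 < r -> U [set l | 0 < eta l < r])
  (hgam0 : U [set l | gam l 0%N = - beta l])
  (hgaml : U [set l | gam l (ell l) = beta l])
  (hspace : U [set l | forall j, (j < ell l)%N ->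
                          0 < gam l j.+1 - gam l j < eta l])
  (hRG : forall r : R, U [set l | exists2 j, (j <= ell l)%N & gam l j = r])
  (v : set (R -> R) -> nat -> R -> R)
  (hv : U [set l | forall j, (j < ell l)%N -> in_span l (v l j) /\ C1 (v l j)])
  (n m : set (R -> R) -> nat)
  (hnm : U [set l | (n l < m l <= ell l)%N]) :
  U [set l | Rintegral lebesgue_measure `[gam l (n l), gam l (m l)]
                 (D2 l (ell l) (gam l) (v l))
             = \sum_(n l <= i < m l)
                 (lim_left (pw (ell l) (gam l) (v l)) (gam l i.+1)
                  - lim_right (pw (ell l) (gam l) (v l)) (gam l i))].
Proof.
move: hU => [_ [_ [UI [UM [_ [Ufin Ufine]]]]]].
have U1 : U [set l | l (fun=> 1)].
  by apply: UM (Ufine _ (finite_set1 (fun=> 1))) => l /=; apply.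
apply: UM (UI _ _ (UI _ _ (UI _ _ (UI _ _ Ufin U1) hspace) hv) hnm).
move=> l [[[[/finite_seqP[s ls] l1] hsp] hvl] /andP[nm ml]].
have lsu : l = [set` undup s].
  by rewrite ls; apply/seteqP; split => x /=; rewrite mem_undup.
have gam_incr j : (j < ell l)%N -> gam l j < gam l j.+1.
  by move=> jl; have /andP[+ _] := hsp j jl; rewrite subr_gt0.
apply: (Rintegral_D2 lsu (undup_uniq s) gam_incr) => //.
- by move=> j jl; have [] := hvl j jl.
- exact: ltnW.
Qed.
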